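(* Let $G$ be a compact group and $z:G\to\mathbb C\setminus\{0\}$ a continuous central function. Then the Ewens measure $\mu^{\mathrm{Ewens}}_{S_n(G)}$ is a probability measure on $S_n(G)$, i.e. $$\int_{S_n(G)} n!\,\frac{\prod_{c\in[G]}z(c)^{[x](c)}\overline{z(c)}^{[x](c)}}{I(I+1)\cdots(I+n-1)}\,d\mu_{S_n(G)}(x)=1,\qquad I=\int_G|z(g)|^2d\mu_G(g).$$
   Context: $G$ compact with normalized Haar measure $\mu_G$; $[G]$ its conjugacy classes; central functions are regarded as functions on $[G]$. $S_n(G)=G^n\rtimes S_n$ with elements $((g_1,\dots,g_n),s)$ and product $((g_i),s)((h_i),t)=((g_ih_{s^{-1}(i)}),st)$. For $x=((g_1,\dots,g_n),s)$, the color of a cycle $(i_1\cdots i_r)$ of $s$ is the conjugacy class of $g_{i_r}\cdots g_{i_1}$, and $[x](c)$ is the number of cycles of $s$ of color $c$. $\mu_{S_n(G)}$ is the product of Haar measure on $G^n$ and the uniform probability measure on $S_n$. The Ewens measure $\mu^{\mathrm{Ewens}}_{S_n(G)}$ is the measure with the displayed density with respect to $\mu_{S_n(G)}$. *)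

From HB Require Import structures.
From mathcomp Require Import all_boot all_order all_algebra all_fingroup.
From mathcomp Require Import all_classical all_reals all_analysis.
From mathcomp Require Import complex.
Set Implicit Arguments. Unset Strict Implicit. Unset Printing Implicit Defensive.
Import Order.TTheory GRing.Theory Num.Theory numFieldNormedType.Exports.
Local Open Scope ring_scope.

Definition Borel (G : ptopologicalType) := g_sigma_algebraType (@open G).

Section Wreath.
Variables (G : ptopologicalType) (mul : G -> G -> G) (e : G).

(* color representative of the cycle C of s, starting at i_1 = some element
   of C (the smallest): g_{i_r} * ... * g_{i_2} * g_{i_1}, with i_{k+1} = s i_k. *)
Definition cycle_color (n : nat) (g : 'I_n -> G) (s : 'S_n) (C : {set 'I_n})
    : G :=
  match [pick i in C] with
  | Some i => foldl (fun acc k => mul (g ((s ^+ k)%g i)) acc) e (iota 0 #|C|)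
  | None => e
  end.

End Wreath.

Fixpoint iint (R : realType) (G : ptopologicalType)
    (mu : {measure set (Borel G) -> \bar R}) (n : nat)
    (F : seq G -> \bar R) : \bar R :=
  match n with
  | 0 => F [::]
  | k.+1 => (\int[mu]_y iint mu k (fun s => F (y :: s)))%E
  end.

(* Integral over S_n(G) w.r.t. mu_{S_n(G)} = (Haar)^{n} x uniform on S_n. *)
Definition int_SnG (R : realType) (G : ptopologicalType)
    (mu : {measure set (Borel G) -> \bar R}) (n : nat)
    (f : ('I_n -> G) -> 'S_n -> \bar R) : \bar R :=
  ((n`!%:R)^-1%:E *
   \sum_(s : 'S_n) iint mu n (fun gs => f (fun i => nth point gs i) s))%E.

(* The (complex-valued) Ewens density
   n! prod_c z(c)^[x](c) conj(z(c))^[x](c) / (I (I+1) ... (I+n-1)),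
   written as a product over the cycles of s (each cycle contributes
   z(color) * conj(z(color))). *)
Definition ewens_density (R : realType) (G : ptopologicalType)
    (mul : G -> G -> G) (e : G) (z : G -> R[i]) (I : R) (n : nat)
    (g : 'I_n -> G) (s : 'S_n) : R[i] :=
  (n`!%:R * \prod_(C in porbits s)
       (z (cycle_color mul e g s C) * (z (cycle_color mul e g s C))^*))
  / ((\prod_(k < n) (I + k%:R))%:C)%C.

From HB Require Import structures.
From mathcomp Require Import all_boot all_order all_algebra all_fingroup.
From mathcomp Require Import all_classical all_reals all_analysis.
From mathcomp Require Import complex.
From mathcomp Require Import measurable_realfun ring zify.
Import Order.TTheory GRing.Theory Num.Theory numFieldNormedType.Exports.
Set Implicit Arguments. Unset Strict Implicit. Unset Printing Implicit Defensive.
Local Open Scope ring_scope.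

(* Fix s in S_n and put f := z z^*. Encode each cycle of s by the word of
   indices it visits; the density is then n!/(I(I+1)...(I+n-1)) times the
   product over the words of f evaluated at the corresponding product of the
   g_i. Integrate out g_n, g_(n-1), ... in turn. The current last variable
   occurs in at most one word, as a middle letter a g_n b with a and b free of
   g_n; by left and right invariance of the Haar measure integrating it out
   deletes that word and produces a factor I, while a variable occurring in no
   word integrates to 1. Hence the integral over G^n is I ^ #cycles(s), and
   the generating function sum_(s in S_n) I ^ #cycles(s) = I(I+1)...(I+n-1),
   proved by conditioning on s^-1(a), cancels the normalisation. *)

Section CycleCountSum.
Variable T : finType.

Lemma porbit_fixed (t : {perm T}) a : t a = a -> porbit t a = [set a].
Proof.
move=> ta; apply/setP => y; rewrite inE; apply/porbitP/eqP => [[i ->]|->].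
  by rewrite permX; elim: i => //= i ->.
by exists 0; rewrite expg0 perm1.
Qed.

Lemma card_porbits1 : #|porbits (1 : {perm T})| = #|T|.
Proof.
rewrite /porbits (eq_imset (g := fun x => [set x])) ?card_imset //; first exact: set1_inj.
by move=> x; rewrite porbit_fixed ?perm1.
Qed.

Lemma card_porbits_tperm_fixed (t : {perm T}) a j : t a = a -> j != a ->
  #|porbits t| = #|porbits (tperm a j * t)%g|.+1.
Proof.
move=> ta ja; have := porbits_mul_tperm t a j.
rewrite porbit_sym porbit_fixed // inE (negbTE ja) eq_sym ja /=; lia.
Qed.

Variable R : comNzRingType.

Lemma sum_perm_on_inv_eq (A : {set T}) a j (F : {perm T} -> R) : a \in A -> j \in A ->
  \sum_(s : {perm T} | perm_on A s && ((s^-1)%g a == j)) F s =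
  \sum_(t : {perm T} | perm_on (A :\ a) t) F (tperm a j * t)%g.
Proof.
move=> aA jA; rewrite (reindex_onto (fun t => tperm a j * t)%g (fun s => tperm a j * s)%g);
  last by move=> s _; rewrite tpermKg.
apply: eq_bigl => t; rewrite tpermKg eqxx andbT invMg permM tpermV.
rewrite (canF_eq (tpermK a j)) tpermR (canF_eq (permKV t)) eq_sym.
have onA_tau : perm_on A (tperm a j).
  apply: fintype.subset_trans (tperm_on a j) _.
  by rewrite finset.subUset !finset.sub1set aA jA.
apply/andP/idP => [[onA_taut /eqP ta]|onAa_t].
  have onA_t : perm_on A t by rewrite -(tpermKg a j t); exact: perm_onM.
  apply/fintype.subsetP => x tx; rewrite !inE (fintype.subsetP onA_t) // andbT.
  by apply: contraNneq tx => ->; rewrite ta.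
have onA_t : perm_on A t := fintype.subset_trans onAa_t (subsetDl A [set a]).
by rewrite perm_onM // (out_perm onAa_t) // !inE eqxx.
Qed.

Lemma sum_tperm_porbits (x : R) (A : {set T}) a (t : {perm T}) :
  a \in A -> perm_on (A :\ a) t ->
  x ^+ #|A| * \sum_(j in A) x ^+ #|porbits (tperm a j * t)%g| =
  (x + #|A :\ a|%:R) * (x ^+ #|A :\ a| * x ^+ #|porbits t|).
Proof.
move=> aA onAa_t; have ta : t a = a by rewrite (out_perm onAa_t) // !inE eqxx.
rewrite (cardsD1 a A) aA add1n (bigD1 a) //= tperm1 mul1g.
have -> : \sum_(j in A | j != a) x ^+ #|porbits (tperm a j * t)%g| =
          \sum_(j in A :\ a) x ^+ #|porbits t|.-1.
  apply: eq_big => [j|j]; first by rewrite !inE andbC.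
  by move=> /andP[_ ja]; rewrite (card_porbits_tperm_fixed ta ja).
have : (0 < #|porbits t|)%N.
  by rewrite card_gt0; apply/set0Pn; exists (porbit t a); exact: imset_f.
rewrite sumr_const -mulr_natl; case: #|porbits t| => // m _ /=.
rewrite !exprS; ring.
Qed.

(* The factor [x ^+ #|A|] accounts for the [#|T| - #|A|] fixed points outside
   [A], each of which is a cycle of every permutation on [A]. *)
Lemma sum_perm_on_porbits (x : R) (A : {set T}) :
  x ^+ #|A| * \sum_(s : {perm T} | perm_on A s) x ^+ #|porbits s| =
  x ^+ #|T| * \prod_(k < #|A|) (x + k%:R).
Proof.
move cardA : #|A| => m; elim: m A cardA => [|m IH] A cardA.
  rewrite big_ord0 expr0 mul1r mulr1 (big_pred1 1%g) ?card_porbits1 // => s /=.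
  by apply/idP/eqP => [onA_s|->]; [apply: perm_on_id onA_s _; rewrite cardA | exact: perm_on1].
have [a aA] : exists a, a \in A by apply/set0Pn; rewrite -cards_eq0 cardA.
have cardAa : #|A :\ a| = m by move: cardA; rewrite (cardsD1 a) aA => -[].
rewrite (partition_big (fun s : {perm T} => (s^-1)%g a) (mem A)) /=; last first.
  by move=> s onA_s; rewrite (perm_closed _ (perm_onV onA_s)).
under eq_bigr => j jA do rewrite sum_perm_on_inv_eq //.
rewrite exchange_big mulr_sumr /=.
under eq_bigr => t onAa_t do rewrite -cardA sum_tperm_porbits // cardAa.
by rewrite -mulr_sumr -mulr_sumr (IH _ cardAa) big_ord_recr /=; ring.
Qed.

End CycleCountSum.

Lemma sum_perm_porbits (R : idomainType) (T : finType) (x : R) : x != 0 ->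
  \sum_(s : {perm T}) x ^+ #|porbits s| = \prod_(k < #|T|) (x + k%:R).
Proof.
move=> x0; apply: (mulfI (expf_neq0 #|T| x0)).
have := sum_perm_on_porbits x [set: T]; rewrite cardsT => <-.
by congr (_ * _); apply: eq_bigl => s; apply/esym/fintype.subsetP => y; rewrite inE.
Qed.

Section WordEvaluation.
Variables (G : pointedType) (mul : G -> G -> G) (e : G).
Hypotheses (mulA : associative mul) (mul1g : left_id e mul).

Definition eval_word (w : seq nat) (gs : seq G) : G :=
  foldl (fun acc k => mul (nth point gs k) acc) e w.

Lemma foldl_eval_word w gs acc :
  foldl (fun acc k => mul (nth point gs k) acc) acc w = mul (eval_word w gs) acc.
Proof.
rewrite /eval_word; elim: w acc => [|k w IH] acc /=; first by rewrite mul1g.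
by rewrite IH [in RHS]IH -!mulA mul1g.
Qed.

Lemma eval_word_cat_cons pre k post gs :
  eval_word (pre ++ k :: post) gs =
  mul (eval_word post gs) (mul (nth point gs k) (eval_word pre gs)).
Proof. by rewrite {1}/eval_word foldl_cat /= foldl_eval_word. Qed.

Lemma eval_word_rcons w gs y : all (fun k => k < size gs)%N w ->
  eval_word w (rcons gs y) = eval_word w gs.
Proof.
rewrite /eval_word; elim: w e => [|k w IH] acc //= /andP[kgs lt_w].
by rewrite nth_rcons kgs IH.
Qed.

End WordEvaluation.

Lemma all_ltnS_notin n (l : seq nat) :
  all (fun k => k < n.+1)%N l -> n \notin l -> all (fun k => k < n)%N l.
Proof.
move=> /allP lt_l n_l; apply/allP => k kl; rewrite ltn_neqAle -ltnS lt_l // andbT.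
by apply: contraNneq n_l => <-.
Qed.

Lemma perm_flatten_rem (T : eqType) (ws : seq (seq T)) pre x post :
  pre ++ x :: post \in ws ->
  perm_eq (flatten ws) (x :: pre ++ post ++ flatten (rem (pre ++ x :: post) ws)).
Proof.
move=> /perm_to_rem/perm_flatten/perm_trans; apply.
by apply/seq.permP => p; rewrite /= !count_cat /=; lia.
Qed.

Lemma uniq_flatten_map (T U : eqType) (h : T -> seq U) (l : seq T) :
  uniq l -> {in l, forall x, uniq (h x)} ->
  {in l &, forall x y u, u \in h x -> u \in h y -> x = y} ->
  uniq (flatten (map h l)).
Proof.
elim: l => [|x l IH] //= /andP[xl ul] hu hd.
rewrite cat_uniq hu ?mem_head // IH //; last first.
- by move=> a b al bl; apply: hd; rewrite in_cons ?al ?bl orbT.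
- by move=> a al; apply: hu; rewrite in_cons al orbT.
rewrite andbT; apply/hasPn => u /flattenP [_ /mapP [y yl ->]] uy; apply/negP => ux.
have yxl : y \in x :: l by rewrite in_cons yl orbT.
by move: xl; rewrite (hd x y (mem_head x l) yxl u ux uy) yl.
Qed.

Lemma map_permX_iota (T : finType) (s : {perm T}) x m :
  [seq (s ^+ k)%g x | k <- iota 0 m] = traject s x m.
Proof.
apply: (@eq_from_nth _ x); first by rewrite size_map size_iota size_traject.
move=> i; rewrite size_map size_iota => im.
by rewrite (nth_map 0%N) ?size_iota // nth_iota // nth_traject // permX.
Qed.

Section CycleWords.
Variables (n : nat) (s : 'S_n).

Definition cycle_word (C : {set 'I_n}) : seq nat :=
  if [pick i in C] is Some i then [seq val ((s ^+ k)%g i) | k <- iota 0 #|C|] else [::].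

Definition cycle_words : seq (seq nat) := [seq cycle_word C | C <- enum (porbits s)].

Lemma size_cycle_words : size cycle_words = #|porbits s|.
Proof. by rewrite size_map cardE. Qed.

Lemma cycle_wordE C : C \in porbits s ->
  exists2 j, C = porbit s j & cycle_word C = map val (traject s j #|porbit s j|).
Proof.
move=> /imsetP [x _ ->]; rewrite /cycle_word; case: pickP => [j jC|]; last first.
  by move=> /(_ x); rewrite porbit_id.
have /eqP Cj : porbit s j == porbit s x by rewrite eq_porbit_mem.
by exists j; rewrite -Cj // -map_permX_iota -map_comp.
Qed.

Lemma nil_notin_cycle_words : [::] \notin cycle_words.
Proof.
apply/mapP => -[C]; rewrite mem_enum => /cycle_wordE [j _ ->] /(congr1 size).
by rewrite size_map size_traject => /esym/eqP; apply/negP; exact: card_porbit_neq0.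
Qed.

Lemma cycle_words_ltn : all (fun k => k < n)%N (flatten cycle_words).
Proof.
apply/allP => k /flattenP [_ /mapP [C _ ->]].
rewrite /cycle_word; case: pickP => [j _ /mapP [m _ ->]|//]; exact: ltn_ord.
Qed.

Lemma uniq_cycle_words : uniq (flatten cycle_words).
Proof.
apply: uniq_flatten_map; first exact: enum_uniq.
  move=> C; rewrite mem_enum => /cycle_wordE [j _ ->].
  by rewrite (map_inj_uniq val_inj) uniq_traject_porbit.
move=> C D; rewrite !mem_enum => /cycle_wordE [j -> ->] /cycle_wordE [k -> ->] u.
move=> /mapP [a aj ->] /mapP [b bk /val_inj ab]; subst b.
have /eqP <- : porbit s a == porbit s j by rewrite eq_porbit_mem porbit_traject.
by apply/eqP; rewrite eq_porbit_mem porbit_traject.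
Qed.

Section Colors.
Variables (G : ptopologicalType) (mul : G -> G -> G) (e : G) (R : comNzRingType) (f : G -> R).

Lemma prod_cycle_colorE (gs : seq G) :
  \prod_(C in porbits s) f (cycle_color mul e (fun i => nth point gs i) s C) =
  \prod_(w <- cycle_words) f (eval_word mul e w gs).
Proof.
rewrite big_map big_enum /=; apply: eq_bigr => C _; congr f.
rewrite /cycle_color /cycle_word /eval_word; case: pickP => //= i _.
by elim: (iota 0 #|C|) e => //=.
Qed.

End Colors.

End CycleWords.

Local Open Scope classical_set_scope.

Lemma continuous_Borel_measurable (R : realType) (G : ptopologicalType) (f : G -> R) :
  continuous f -> measurable_fun [set: Borel G] f.
Proof.
move=> /continuousP cf; apply: (measurability _ (RGenOpens.measurableE R)).
move=> _ [_ [a [b ->] <-]]; rewrite setTI; apply: sub_sigma_algebra.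
by apply: cf; exact: interval_open.
Qed.

Lemma continuous_Borel_measurable_endo (G : ptopologicalType) (phi : G -> G) :
  continuous phi -> measurable_fun [set: Borel G] (phi : Borel G -> Borel G).
Proof.
move=> /continuousP cphi.
apply: (@measurability _ _ (Borel G) (Borel G) _ _ (@open G)) => // _ [A oA <-].
by rewrite setTI; apply: sub_sigma_algebra; exact: cphi.
Qed.

Lemma compact_continuous_ub (R : realType) (T : topologicalType) (f : T -> R) :
  compact [set: T] -> continuous f -> exists M, forall x, f x <= M.
Proof.
move=> cT cf; have cfT := continuous_compact (continuous_subspaceT cf) cT.
have [M [_ leM]] := @compact_bounded R R^o _ cfT.
exists (`|M| + 1) => x; apply: le_trans (ler_norm _) _.
by apply: leM (ex_intro2 _ _ x I erefl); rewrite (le_lt_trans (ler_norm M)) // ltrDl.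
Qed.

Lemma compact_continuous_gt0_lb (R : realType) (T : topologicalType) (f : T -> R) :
  compact [set: T] -> continuous f -> (forall x, 0 < f x) ->
  exists2 m, 0 < m & forall x, m <= f x.
Proof.
move=> cT cf f_gt0; have [M leM] : exists M, forall x, (f x)^-1 <= M.
  by apply: compact_continuous_ub => // x; apply: cvgV; [rewrite gt_eqF | exact: cf].
exists (Num.max M 1)^-1 => [|x]; first by rewrite invr_gt0 lt_max ltr01 orbT.
rewrite -[f x]invrK lef_pV2 ?posrE ?invr_gt0 ?lt_max ?ltr01 ?orbT //.
by rewrite le_max leM.
Qed.

Lemma integral_preserving_map d (T : measurableType d) (R : realType)
    (mu : {measure set T -> \bar R}) (phi : T -> T) (h : T -> \bar R) :
  measurable_fun [set: T] phi -> (forall A, measurable A -> mu (phi @^-1` A) = mu A) ->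
  measurable_fun [set: T] h -> (forall x, 0 <= h x)%E ->
  (\int[mu]_x h (phi x) = \int[mu]_x h x)%E.
Proof.
move=> mphi mu_phi mh h0.
rewrite [RHS](eq_measure_integral (pushforward mu phi)); last first.
  by move=> A mA _; rewrite -mu_phi.
by rewrite [RHS]ge0_integral_pushforward.
Qed.

Section BiInvariantIntegral.
Variables (R : realType) (G : ptopologicalType) (mul : G -> G -> G).
Hypothesis mul_cont : continuous (fun p : G * G => mul p.1 p.2).
Variable mu : {measure set (Borel G) -> \bar R}.
Hypothesis mu_left : forall (g : G) (A : set (Borel G)), measurable A ->
  mu ((fun x : Borel G => (mul g x : Borel G)) @^-1` A) = mu A.
Hypothesis mu_right : forall (g : G) (A : set (Borel G)), measurable A ->
  mu ((fun x : Borel G => (mul x g : Borel G)) @^-1` A) = mu A.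

Lemma continuous_mull a : continuous (mul a).
Proof.
move=> x; apply: (@continuous_comp _ _ _ (pair a) (fun p : G * G => mul p.1 p.2)).
  by apply: cvg_pair; [exact: cvg_cst | exact: cvg_id].
exact: mul_cont.
Qed.

Lemma continuous_mulr b : continuous (mul^~ b).
Proof.
move=> x; apply: (@continuous_comp _ _ _ (fun y => (y, b)) (fun p : G * G => mul p.1 p.2)).
  by apply: cvg_pair; [exact: cvg_id | exact: cvg_cst].
exact: mul_cont.
Qed.

Lemma measurable_mull a : measurable_fun [set: Borel G] (mul a : Borel G -> Borel G).
Proof. exact: continuous_Borel_measurable_endo (@continuous_mull a). Qed.

Lemma measurable_mulr b : measurable_fun [set: Borel G] (mul^~ b : Borel G -> Borel G).
Proof. exact: continuous_Borel_measurable_endo (@continuous_mulr b). Qed.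

Lemma measurable_translate (f : G -> R) a b : measurable_fun [set: Borel G] f ->
  measurable_fun [set: Borel G] (fun x => f (mul a (mul x b))).
Proof.
move=> mf; apply: (measurableT_comp mf).
exact: measurableT_comp (measurable_mull a) (measurable_mulr b).
Qed.

Lemma integral_translate (f : G -> R) a b :
  measurable_fun [set: Borel G] f -> (forall x, 0 <= f x) ->
  (\int[mu]_x (f (mul a (mul x b)))%:E = \int[mu]_x (f x)%:E)%E.
Proof.
move=> mf f_ge0; have f_ge0E x : (0 <= (f x)%:E)%E by rewrite lee_fin.
have mfa : measurable_fun [set: Borel G] (fun y => (f (mul a y))%:E).
  by apply/measurable_EFinP; exact: measurableT_comp mf (measurable_mull a).
transitivity (\int[mu]_x (f (mul a x))%:E)%E.
  exact: integral_preserving_map (measurable_mulr b) (mu_right b) mfa _.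
apply: integral_preserving_map (measurable_mull a) (mu_left a) _ _ => //.
exact/measurable_EFinP.
Qed.

End BiInvariantIntegral.

Lemma integral_cst_probability d (T : measurableType d) (R : realType)
    (mu : probability T R) (r : R) :
  (\int[mu]_x r%:E = r%:E)%E.
Proof. by rewrite integral_cst // [X in (_ * X)%E]probability_setT mule1. Qed.

Section ContinuousIntegral.
Variables (R : realType) (G : ptopologicalType) (mu : probability (Borel G) R).
Hypothesis G_compact : compact [set: G].
Variable f : G -> R.
Hypotheses (f_cont : continuous f) (f_gt0 : forall x, 0 < f x).

Let f_ge0E x : (0 <= (f x)%:E)%E. Proof. by rewrite lee_fin ltW. Qed.

Let mfE : measurable_fun [set: Borel G] (fun x => (f x)%:E).
Proof. by apply/measurable_EFinP; exact: continuous_Borel_measurable. Qed.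

Lemma integral_continuous_gt0E :
  (\int[mu]_x (f x)%:E = (Rintegral mu [set: Borel G] f)%:E)%E.
Proof.
have [M leM] := compact_continuous_ub G_compact f_cont.
rewrite /Rintegral fineK // ge0_fin_numE ?integral_ge0 //.
apply: (@le_lt_trans _ _ M%:E); last exact: ltry.
rewrite -(integral_cst_probability mu M); apply: ge0_le_integral => //= x _.
by rewrite lee_fin.
Qed.

Lemma Rintegral_continuous_gt0 : 0 < Rintegral mu [set: Borel G] f.
Proof.
have [m m_gt0 leM] := compact_continuous_gt0_lb G_compact f_cont f_gt0.
rewrite (lt_le_trans m_gt0) // -lee_fin -integral_continuous_gt0E.
by rewrite -(integral_cst_probability mu m); apply: ge0_le_integral => //= x _;
  rewrite lee_fin ?leM ?(ltW m_gt0).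
Qed.

End ContinuousIntegral.

Lemma Re_mul_conjC (R : rcfType) (w : R[i]) :
  complex.Re (w * w^*) = complex.Re w ^+ 2 + complex.Im w ^+ 2.
Proof. by case: w => a b /=; ring. Qed.

Lemma mul_conjC_realE (R : rcfType) (w : R[i]) : w * w^* = (complex.Re (w * w^*))%:C%C.
Proof. by rewrite RRe_real // ger0_real // mul_conjC_ge0. Qed.

Lemma Re_mul_conjC_gt0 (R : rcfType) (w : R[i]) : w != 0 -> 0 < complex.Re (w * w^*).
Proof. by rewrite -mul_conjC_gt0 ltcE => /andP[]. Qed.

Lemma continuous_Re_mul_conjC (T : topologicalType) (R : realType) (z : T -> R[i]) :
  continuous (fun x => complex.Re (z x)) -> continuous (fun x => complex.Im (z x)) ->
  continuous (fun x => complex.Re (z x * (z x)^*)).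
Proof.
move=> cRe cIm; rewrite (_ : (fun x => _) =
    fun x => complex.Re (z x) * complex.Re (z x) + complex.Im (z x) * complex.Im (z x)).
  by move=> x; apply: cvgD; apply: cvgM; [exact: cRe | exact: cRe | exact: cIm | exact: cIm].
by apply/funext => x; rewrite Re_mul_conjC !expr2.
Qed.

Section IteratedIntegral.
Variables (R : realType) (G : ptopologicalType) (mu : {measure set (Borel G) -> \bar R}).

Lemma iint_ext n (F F' : seq G -> \bar R) :
  (forall s, size s = n -> F s = F' s) -> iint mu n F = iint mu n F'.
Proof.
elim: n F F' => [|n IH] F F' FF' /=; first exact: FF'.
by congr (integral _ _); apply: funext => y; apply: IH => s sn; rewrite FF' //= sn.
Qed.

Lemma iint_rcons n (F : seq G -> \bar R) :
  iint mu n.+1 F = iint mu n (fun s => (\int[mu]_y F (rcons s y))%E).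
Proof.
elim: n F => [|n IH] F //=.
by congr (integral _ _); apply: funext => y; exact: (IH (fun s => F (y :: s))).
Qed.

End IteratedIntegral.

Section CycleIntegral.
Variables (R : realType) (G : ptopologicalType) (mul : G -> G -> G) (e : G).
Hypotheses (mulA : associative mul) (mul1g : left_id e mul).
Variable mu : probability (Borel G) R.
Variables (f : G -> R) (I : R).
Hypothesis f_ge0 : forall x, 0 <= f x.
Hypothesis f_translate_measurable :
  forall a b, measurable_fun [set: Borel G] (fun x => f (mul a (mul x b))).
Hypothesis f_translate_integral :
  forall a b, (\int[mu]_x (f (mul a (mul x b)))%:E = I%:E)%E.

Local Notation eval_word := (eval_word mul e).

Lemma translate_integral_ge0 : 0 <= I.
Proof.
by rewrite -lee_fin -(f_translate_integral e e) integral_ge0 // => x _; rewrite lee_fin.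
Qed.

Lemma prod_eval_word_rcons ws gs y : all (fun k => k < size gs)%N (flatten ws) ->
  \prod_(w <- ws) f (eval_word w (rcons gs y)) = \prod_(w <- ws) f (eval_word w gs).
Proof.
move=> /allP lt_ws; apply: eq_big_seq => w wws; rewrite eval_word_rcons //.
by apply/allP => k kw; apply: lt_ws; apply/flattenP; exists w.
Qed.

Lemma integral_prod_words_fresh ws gs c : all (fun k => k < size gs)%N (flatten ws) ->
  (\int[mu]_y (c * \prod_(w <- ws) f (eval_word w (rcons gs y)))%:E =
   (c * \prod_(w <- ws) f (eval_word w gs))%:E)%E.
Proof.
move=> lt_ws; under eq_integral do rewrite (prod_eval_word_rcons _ lt_ws).
exact: integral_cst_probability.
Qed.

Lemma integral_prod_words_last ws ws' gs pre post c : 0 <= c ->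
  perm_eq ws ((pre ++ size gs :: post) :: ws') ->
  all (fun k => k < size gs)%N (pre ++ post ++ flatten ws') ->
  (\int[mu]_y (c * \prod_(w <- ws) f (eval_word w (rcons gs y)))%:E =
   (c * I * \prod_(w <- ws') f (eval_word w gs))%:E)%E.
Proof.
rewrite !all_cat => c0 perm_ws /and3P[lt_pre lt_post lt_ws'].
have integrandE (y : Borel G) : c * \prod_(w <- ws) f (eval_word w (rcons gs y)) =
    c * \prod_(w <- ws') f (eval_word w gs) *
    f (mul (eval_word post gs) (mul y (eval_word pre gs))).
  rewrite (perm_big _ perm_ws) big_cons (prod_eval_word_rcons y lt_ws').
  rewrite (eval_word_cat_cons mulA mul1g) nth_rcons ltnn eqxx.
  by rewrite (eval_word_rcons _ _ y lt_pre) (eval_word_rcons _ _ y lt_post) mulrCA mulrC.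
rewrite (eq_integral (fun y : Borel G => (c * \prod_(w <- ws') f (eval_word w gs))%:E *
  (f (mul (eval_word post gs) (mul y (eval_word pre gs))))%:E)%E); last first.
  by move=> y _; rewrite integrandE EFinM.
rewrite ge0_integralZl //.
- by rewrite f_translate_integral -EFinM mulrAC.
- by apply/measurable_EFinP; exact: f_translate_measurable.
- by move=> y _; rewrite lee_fin.
- by rewrite lee_fin mulr_ge0 // prodr_ge0.
Qed.

Lemma iint_prod_words n ws c : 0 <= c -> [::] \notin ws -> uniq (flatten ws) ->
  all (fun k => k < n)%N (flatten ws) ->
  iint mu n (fun gs => (c * \prod_(w <- ws) f (eval_word w gs))%:E) =
  (c * I ^+ size ws)%:E.
Proof.
elim: n ws c => [|n IH] ws c c0 ws_nil u_ws lt_ws.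
  case: ws ws_nil lt_ws {u_ws} => [_ _|[|k w] ws]; first by rewrite /= big_nil expr0.
    by rewrite in_cons eqxx.
  by [].
rewrite iint_rcons.
have [/flattenP[w wws nw] | n_ws] := boolP (n \in flatten ws); last first.
  have lt'_ws := all_ltnS_notin lt_ws n_ws.
  have integrate_last s : size s = n ->
      (\int[mu]_y (c * \prod_(w <- ws) f (eval_word w (rcons s y)))%:E =
       (c * \prod_(w <- ws) f (eval_word w s))%:E)%E.
    by move=> sn; apply: integral_prod_words_fresh; rewrite sn.
  by rewrite (iint_ext _ integrate_last) IH.
case/splitPr: nw wws => pre post wws.
set ws' := rem (pre ++ n :: post) ws.
have perm_ws : perm_eq ws ((pre ++ n :: post) :: ws') := perm_to_rem wws.
have perm_flat := perm_flatten_rem wws.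
move: u_ws lt_ws; rewrite (perm_uniq perm_flat) (perm_all _ perm_flat) /=.
move=> /andP[n_rest u_rest] /andP[_ /all_ltnS_notin /(_ n_rest) lt_rest].
have integrate_last s : size s = n ->
    (\int[mu]_y (c * \prod_(w <- ws) f (eval_word w (rcons s y)))%:E =
     (c * I * \prod_(w <- ws') f (eval_word w s))%:E)%E.
  by move=> sn; rewrite (@integral_prod_words_last ws ws' s pre post) ?sn.
rewrite (iint_ext _ integrate_last) IH.
- by rewrite (perm_size perm_ws) exprS mulrA.
- by rewrite mulr_ge0 // translate_integral_ge0.
- by apply: contra ws_nil; exact: mem_rem.
- by move: u_rest; rewrite catA cat_uniq => /and3P[].
- by move: lt_rest; rewrite !all_cat => /and3P[].
Qed.

End CycleIntegral.

Lemma ewens_densityE (R : realType) (G : ptopologicalType) (mul : G -> G -> G) (e : G)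
    (z : G -> R[i]) (I : R) n (g : 'I_n -> G) (s : 'S_n) :
  ewens_density mul e z I g s =
  ((n`!%:R * \prod_(C in porbits s) complex.Re (z (cycle_color mul e g s C) *
      (z (cycle_color mul e g s C))^*)) / \prod_(k < n) (I + k%:R))%:C%C.
Proof.
rewrite /ewens_density fmorph_div rmorphM rmorph_nat !rmorph_prod.
by congr (_ * _ / _); apply: eq_bigr => C _; exact: mul_conjC_realE.
Qed.

Section EwensIntegral.
Variables (R : realType) (G : ptopologicalType) (mul : G -> G -> G) (e : G).
Hypotheses (mulA : associative mul) (mul1g : left_id e mul).
Variable mu : probability (Borel G) R.
Variables (z : G -> R[i]) (I : R).
Local Notation f := (fun g => complex.Re (z g * (z g)^*)).
Hypothesis f_translate_measurable :
  forall a b, measurable_fun [set: Borel G] (fun x => f (mul a (mul x b))).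
Hypothesis f_translate_integral :
  forall a b, (\int[mu]_x (f (mul a (mul x b)))%:E = I%:E)%E.
Hypothesis I_gt0 : 0 < I.

Let D n := \prod_(k < n) (I + k%:R).

Let D_gt0 n : 0 < D n.
Proof. by apply: prodr_gt0 => k _; rewrite ltr_wpDr. Qed.

Lemma iint_ewens_density n (s : 'S_n) :
  iint mu n (fun gs => (complex.Re (ewens_density mul e z I (fun i => nth point gs i) s))%:E) =
  (n`!%:R / D n * I ^+ #|porbits s|)%:E.
Proof.
have f_ge0 g : 0 <= f g by rewrite Re_mul_conjC addr_ge0 ?sqr_ge0.
transitivity (iint mu n (fun gs =>
    (n`!%:R / D n * \prod_(w <- cycle_words s) f (eval_word mul e w gs))%:E)).
  apply: iint_ext => gs _.
  by rewrite ewens_densityE /= (prod_cycle_colorE s mul e f gs) mulrAC.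
rewrite (iint_prod_words mulA mul1g f_ge0 f_translate_measurable f_translate_integral)
  ?size_cycle_words //.
- by rewrite divr_ge0 // ltW.
- exact: nil_notin_cycle_words.
- exact: uniq_cycle_words.
- exact: cycle_words_ltn.
Qed.

Lemma int_SnG_ewens_density (n : nat) :
  int_SnG mu (fun (g : 'I_n -> G) (s : 'S_n) =>
    (complex.Re (ewens_density mul e z I g s))%:E) = 1%E.
Proof.
rewrite /int_SnG; under eq_bigr => s _ do rewrite iint_ewens_density.
rewrite sumEFin -EFinM -mulr_sumr sum_perm_porbits ?gt_eqF // card_ord.
have n_neq0 : n`!%:R != 0 :> R by rewrite pnatr_eq0 -lt0n fact_gt0.
by rewrite -/(D n) divfK ?gt_eqF // mulVf.
Qed.

End EwensIntegral.

Theorem mainTheorem2 (R : realType) (G : ptopologicalType)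
  (mul : G -> G -> G) (inv : G -> G) (e : G)
  (* group axioms *)
  (mulA : forall x y w, mul x (mul y w) = mul (mul x y) w)
  (mul1g : forall x, mul e x = x)
  (mulVg : forall x, mul (inv x) x = e)
  (* compact (Hausdorff) topological group *)
  (mul_cont : continuous (fun p : G * G => mul p.1 p.2))
  (inv_cont : continuous inv)
  (G_hausdorff : hausdorff_space G)
  (G_compact : compact [set: G])
  (* normalized Haar measure on the Borel sets of G *)
  (mu : probability (Borel G) R)
  (mu_left : forall (g : G) (A : set (Borel G)), measurable A ->
      mu ((fun x : Borel G => (mul g x : Borel G)) @^-1` A) = mu A)
  (mu_right : forall (g : G) (A : set (Borel G)), measurable A ->
      mu ((fun x : Borel G => (mul x g : Borel G)) @^-1` A) = mu A)
  (* z : G -> C \ {0}, continuous and central *)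
  (z : G -> R[i])
  (z_neq0 : forall g, z g != 0)
  (z_cont_Re : continuous (fun g : G => (complex.Re (z g) : R)))
  (z_cont_Im : continuous (fun g : G => (complex.Im (z g) : R)))
  (z_central : forall g h, z (mul h (mul g (inv h))) = z g)
  (n : nat) :
  let I := Rintegral mu [set: Borel G] (fun g => complex.Re (z g * (z g)^*)) in
  (forall (g : 'I_n -> G) (s : 'S_n),
      complex.Im (ewens_density mul e z I g s) = 0) /\
  int_SnG mu (fun (g : 'I_n -> G) (s : 'S_n) => (complex.Re (ewens_density mul e z I g s))%:E) = 1%E.
Proof.
move=> I; set f := fun g => complex.Re (z g * (z g)^*) in I *.
have f_cont : continuous f := continuous_Re_mul_conjC z_cont_Re z_cont_Im.
have f_gt0 g : 0 < f g := Re_mul_conjC_gt0 (z_neq0 g).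
have mf := continuous_Borel_measurable f_cont.
split=> [g s|]; first by rewrite ewens_densityE.
apply: int_SnG_ewens_density => //.
- by move=> a b; exact (measurable_translate mul_cont a b mf).
- move=> a b.
  have := integral_translate mul_cont mu_left mu_right a b mf (fun x => ltW (f_gt0 x)).
  by rewrite (integral_continuous_gt0E mu G_compact f_cont f_gt0).
- exact (Rintegral_continuous_gt0 mu G_compact f_cont f_gt0).
Qed.
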